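(* Let $I\in[0,1)$ and let $l\ge 1$ be an integer. For integers $m\ge -1$ and $n\in\{0,1,\dots,l\}$, let $Q(l,m,n)$ be the probability that the random walk started at $[m,n]^T$ (defined in the context) hits the line $\mathcal{L}_1=\{[m',n']^T : m'=-1\}$ before hitting the line $\mathcal{L}_2=\{[m',n']^T: n'=l\}$. Then $$Q(l,m,n)=\begin{cases}\sum_{i=0}^{l-n-1} a_{i,m}(1-I)^i I^{m+1+i}, & \text{if } m\ge 0,\ 0\le n<l,\\ 1, & \text{if } m=-1,\ 0\le n<l,\\ 0, & \text{if } m>0,\ n=l,\end{cases}$$ where the coefficients $a_{i,m}$ ($i\ge 0$, $m\ge 0$) are given by $$a_{i,m}=\begin{cases} 1, & i=0,\\ 1+m, & i=1,\\ C_i, & m=0,\\ C_{i+1}, & m=1,\\ C_{i+1}+\sum_{k=1}^{i-2} S_k\big(C_{i+1-k}\big)+S_{i-1}\big(1+j_{i-1}\big), & i>1 \text{ and } m>1.\end{cases}$$ Here $C_i=\frac{1}{i+1}\binom{2i}{i}=\frac{(2i)!}{(i+1)!\,i!}$ is the $i$-th Catalan number, and for $k\ge1$ and a summand $f$ (possibly depending on $j_k$), $S_k(f)$ denotes the nested sum $$S_k(f)=\sum_{j_1=3}^{m+1}\sum_{j_2=3}^{j_1+1}\cdots\sum_{j_k=3}^{j_{k-1}+1} f,$$ i.e. the sum over all integer tuples $(j_1,\dots,j_k)$ with $3\le j_1\le m+1$ and $3\le j_r\le j_{r-1}+1$ for $2\le r\le k$. (So, for instance, $S_1(C_i)=\sum_{j_1=3}^{m+1}C_i$,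 $S_2(C_{i-1})=\sum_{j_1=3}^{m+1}\sum_{j_2=3}^{j_1+1}C_{i-1}$, the last constant term is $S_{i-2}(C_3)$, and the final term is $S_{i-1}(1+j_{i-1})$.)
   Context: Fix $I\in[0,1)$. Let $\delta_1,\delta_2,\dots$ be i.i.d. random vectors in $\mathbb{Z}^2$ with $\delta_t=[-1,0]^T$ with probability $I$ and $\delta_t=[1,1]^T$ with probability $1-I$. For a starting point $[m,n]^T$ define $s_T=[m,n]^T+\sum_{t=1}^T\delta_t$ for $T\ge 0$ (so $s_0=[m,n]^T$). Let $\mathcal{L}_1=\{[m',n']^T: m'=-1\}$ and, for a positive integer $l$, $\mathcal{L}_2=\{[m',n']^T: n'=l\}$. The probability of hitting $\mathcal{L}_1$ before $\mathcal{L}_2$ is $$Q(l,m,n)=\sum_{T=0}^{\infty}\Pr\big(s_T\in\mathcal{L}_1,\ s_{T'}\notin\mathcal{L}_1\cup\mathcal{L}_2\ \forall\, T'<T\big).$$ (Interpretation: $m$ is the number of blocks by which an attacker's branch lags behind an honest branch, $n$ the number of blocks the honest branch has grown; each new block goes to the attacker with probability $I$, and the attacker wins if its branch surpasses the honest one before the honest branch has grown by $l$ blocks.) *)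

From Stdlib Require Import Reals ZArith List Arith.
From Coquelicot Require Import Coquelicot.
Import ListNotations.
Open Scope R_scope.

(** Finite sum of g j for j = a, a+1, ..., b (empty if b < a). *)
Definition rsum (a b : nat) (g : nat -> R) : R :=
  fold_right Rplus 0 (map g (seq a (S b - a))).

(** All step sequences of length T ([false] = attacker step [-1,0]^T,
    [true] = honest step [1,1]^T). *)
Fixpoint paths (T : nat) : list (list bool) :=
  match T with
  | O => [ [] ]
  | S T' => map (cons false) (paths T') ++ map (cons true) (paths T')
  end.

Definition step (b : bool) : Z * Z := if b then (1%Z, 1%Z) else ((-1)%Z, 0%Z).

Definition path_prob (I : R) (w : list bool) : R :=
  fold_right Rmult 1 (map (fun b : bool => if b then 1 - I else I) w).

Definition pos (m n : Z) (w : list bool) (k : nat) : Z * Z :=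
  fold_left (fun p b => ((fst p + fst (step b))%Z, (snd p + snd (step b))%Z))
            (firstn k w) (m, n).

Definition inL1 (p : Z * Z) : bool := Z.eqb (fst p) (-1).
Definition inL2 (l : Z) (p : Z * Z) : bool := Z.eqb (snd p) l.

Definition first_hit_L1 (l m n : Z) (T : nat) (w : list bool) : bool :=
  inL1 (pos m n w T) &&
  forallb (fun k => negb (inL1 (pos m n w k) || inL2 l (pos m n w k))) (seq 0 T).

Definition hit_term (I : R) (l m n : Z) (T : nat) : R :=
  fold_right Rplus 0
    (map (fun w => if first_hit_L1 l m n T w then path_prob I w else 0) (paths T)).

Definition Q (I : R) (l m n : Z) : R := Series (hit_term I l m n).

Definition catalan (i : nat) : R :=
  INR (fact (2 * i)) / (INR (fact (i + 1)) * INR (fact i)).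

(** Nested sum: nsum k ub f = sum_{j_1=3}^{ub} sum_{j_2=3}^{j_1+1} ...
    sum_{j_k=3}^{j_{k-1}+1} f j_k   (for k >= 1). *)
Fixpoint nsum (k ub : nat) (f : nat -> R) : R :=
  match k with
  | O => 0
  | S k' => rsum 3 ub (fun j => match k' with
                               | O => f j
                               | _ => nsum k' (j + 1) f
                               end)
  end.

Definition Snest (m k : nat) (f : nat -> R) : R := nsum k (m + 1) f.

Definition coef_a (i m : nat) : R :=
  if Nat.eqb i 0 then 1
  else if Nat.eqb i 1 then 1 + INR m
  else if Nat.eqb m 0 then catalan i
  else if Nat.eqb m 1 then catalan (i + 1)
  else catalan (i + 1)
       + rsum 1 (i - 2) (fun k => Snest m k (fun _ => catalan (i + 1 - k)))
       + Snest m (i - 1) (fun j => 1 + INR j).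

(* The walk leaves the strip between L1 and L2 after at most 2(l-n)+m+1 steps
   (each step lowers 2(l-n)+m by one), so the series defining Q has finitely
   many nonzero terms and Q obeys the first-step recurrence
   Q(m,n) = I Q(m-1,n) + (1-I) Q(m+1,n+1), with Q = 1 on L1 and Q = 0 on L2.
   The coefficients a_{i,m} are the ballot numbers
   (m+1)(m+2i)! / (i! (m+i+1)!), which satisfy
   a_{i+1,m+1} = a_{i+1,m} + a_{i,m+2}; the nested sums S_k are this
   recurrence unrolled in m.  With it, the closed form satisfies the same
   recurrence and boundary values, so it equals Q by induction on 2(l-n)+m. *)

From Pilot Require Import Defs.
From Stdlib Require Import Reals ZArith List Arith Lia Lra Bool.
From Coquelicot Require Import Coquelicot.
Import ListNotations.
Open Scope R_scope.

Lemma fold_right_Rplus_app (l1 l2 : list R) :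
  fold_right Rplus 0 (l1 ++ l2) = fold_right Rplus 0 l1 + fold_right Rplus 0 l2.
Proof. induction l1 as [|x l1 IH]; simpl; [ring | rewrite IH; ring]. Qed.

Lemma fold_right_Rplus_scal {A} (c : R) (g : A -> R) (l : list A) :
  c * fold_right Rplus 0 (map g l) = fold_right Rplus 0 (map (fun x => c * g x) l).
Proof. induction l as [|x l IH]; simpl; [ring | rewrite <- IH; ring]. Qed.

Lemma fold_right_Rplus_zero {A} (l : list A) :
  fold_right Rplus 0 (map (fun _ => 0) l) = 0.
Proof. induction l as [|x l IH]; simpl; [reflexivity | rewrite IH; ring]. Qed.

Lemma rsum_cons a b g : (a <= b)%nat -> rsum a b g = g a + rsum (S a) b g.
Proof.
  intro Hab. unfold rsum. replace (S b - a)%nat with (S (S b - S a)) by lia.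
  reflexivity.
Qed.

Lemma rsum_snoc a b g : (a <= S b)%nat -> rsum a (S b) g = rsum a b g + g (S b).
Proof.
  intro Hab. unfold rsum. replace (S (S b) - a)%nat with (S (S b - a)) by lia.
  rewrite seq_S, map_app, fold_right_Rplus_app. cbn [map fold_right].
  replace (a + (S b - a))%nat with (S b) by lia. ring.
Qed.

Lemma rsum_shift a b g : rsum (S a) (S b) g = rsum a b (fun k => g (S k)).
Proof. unfold rsum. rewrite <- seq_shift, map_map. reflexivity. Qed.

Lemma rsum_plus a b f g : rsum a b (fun k => f k + g k) = rsum a b f + rsum a b g.
Proof.
  unfold rsum. induction (seq a (S b - a)) as [|x s IH]; simpl; [ring | rewrite IH; ring].
Qed.

Lemma rsum_ext a b f g :
  (forall k, (a <= k <= b)%nat -> f k = g k) -> rsum a b f = rsum a b g.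
Proof.
  intro Hfg. unfold rsum. f_equal. apply map_ext_in.
  intros k Hk. apply in_seq in Hk. apply Hfg. lia.
Qed.

Lemma rsum_zero a b : rsum a b (fun _ => 0) = 0.
Proof. apply fold_right_Rplus_zero. Qed.

(* [psum d g] is g 0 + ... + g (d-1); unlike [rsum 0 (d-1)] it is empty for d = 0. *)
Fixpoint psum (d : nat) (g : nat -> R) : R :=
  match d with O => 0 | S d' => psum d' g + g d' end.

Lemma psum_S_l d g : psum (S d) g = g O + psum d (fun i => g (S i)).
Proof. induction d as [|d IH]; simpl in *; [ring | rewrite IH; ring]. Qed.

Lemma psum_scal c d g : c * psum d g = psum d (fun i => c * g i).
Proof. induction d as [|d IH]; simpl; [ring | rewrite <- IH; ring]. Qed.

Lemma psum_plus d f g : psum d f + psum d g = psum d (fun i => f i + g i).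
Proof. induction d as [|d IH]; simpl; [ring | rewrite <- IH; ring]. Qed.

Lemma psum_ext d f g : (forall i, f i = g i) -> psum d f = psum d g.
Proof. intro Hfg. induction d as [|d IH]; simpl; [ring | rewrite IH, Hfg; ring]. Qed.

Lemma rsum_0_psum d g : rsum 0 d g = psum (S d) g.
Proof.
  induction d as [|d IH]; [unfold rsum; simpl; ring |].
  rewrite rsum_snoc, IH by lia. reflexivity.
Qed.

Definition ballot (i m : nat) : R :=
  INR (m + 1) * INR (fact (m + 2 * i)) / (INR (fact i) * INR (fact (m + i + 1))).

Lemma ballot_0_l m : ballot 0 m = 1.
Proof.
  unfold ballot. replace (m + 2 * 0)%nat with m by lia.
  replace (m + 0 + 1)%nat with (S m) by lia. replace (m + 1)%nat with (S m) by lia.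
  rewrite fact_simpl, mult_INR.
  pose proof (INR_fact_neq_0 m). pose proof (not_0_INR (S m) (Nat.neq_succ_0 m)).
  change (INR (fact 0)) with 1. field. auto.
Qed.

Lemma ballot_1_l m : ballot 1 m = 1 + INR m.
Proof.
  unfold ballot. replace (m + 2 * 1)%nat with (S (S m)) by lia.
  replace (m + 1 + 1)%nat with (S (S m)) by lia. replace (m + 1)%nat with (S m) by lia.
  pose proof (INR_fact_neq_0 (S (S m))).
  change (INR (fact 1)) with 1. rewrite S_INR. field. auto.
Qed.

Lemma ballot_S_S i m : ballot (S i) (S m) = ballot (S i) m + ballot i (S (S m)).
Proof.
  unfold ballot.
  replace (S m + 2 * S i)%nat with (S (S (S (m + 2 * i)))) by lia.
  replace (m + 2 * S i)%nat with (S (S (m + 2 * i))) by lia.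
  replace (S (S m) + 2 * i)%nat with (S (S (m + 2 * i))) by lia.
  replace (S m + S i + 1)%nat with (S (S (S (m + i)))) by lia.
  replace (m + S i + 1)%nat with (S (S (m + i))) by lia.
  replace (S (S m) + i + 1)%nat with (S (S (S (m + i)))) by lia.
  replace (S m + 1)%nat with (S (S m)) by lia.
  replace (m + 1)%nat with (S m) by lia.
  replace (S (S m) + 1)%nat with (S (S (S m))) by lia.
  rewrite !fact_simpl, !mult_INR.
  pose proof (INR_fact_neq_0 i). pose proof (INR_fact_neq_0 (m + i)).
  pose proof (INR_fact_neq_0 (m + 2 * i)). pose proof (pos_INR m). pose proof (pos_INR i).
  rewrite !S_INR, !plus_INR, !mult_INR. simpl (INR 2).
  field. repeat split; lra.
Qed.

Lemma ballot_S_0 i : ballot (S i) 0 = ballot i 1.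
Proof.
  unfold ballot.
  replace (0 + 2 * S i)%nat with (S (S (2 * i))) by lia.
  replace (1 + 2 * i)%nat with (S (2 * i)) by lia.
  replace (0 + S i + 1)%nat with (S (S i)) by lia.
  replace (0 + 1)%nat with 1%nat by lia. replace (1 + 1)%nat with 2%nat by lia.
  replace (1 + i + 1)%nat with (S (S i)) by lia.
  rewrite (fact_simpl (S (2 * i))), (fact_simpl (2 * i)), (fact_simpl i), !mult_INR.
  pose proof (INR_fact_neq_0 i). pose proof (INR_fact_neq_0 (2 * i)).
  pose proof (INR_fact_neq_0 (S (S i))). pose proof (pos_INR i).
  rewrite !S_INR, mult_INR. change (INR 0) with 0. change (INR 2) with 2.
  field. split; lra.
Qed.

Lemma catalan_ballot i : catalan i = ballot i 0.
Proof.
  unfold catalan, ballot. replace (0 + 2 * i)%nat with (2 * i)%nat by lia.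
  replace (0 + i + 1)%nat with (i + 1)%nat by lia. change (INR (0 + 1)) with 1.
  pose proof (INR_fact_neq_0 i). pose proof (INR_fact_neq_0 (i + 1)).
  field. auto.
Qed.

Lemma catalan_S_ballot i : catalan (S i) = ballot i 1.
Proof. rewrite catalan_ballot, ballot_S_0. reflexivity. Qed.

Lemma nsum_1_S u f : (2 <= u)%nat -> nsum 1 (S u) f = nsum 1 u f + f (S u).
Proof. intro Hu. apply rsum_snoc. lia. Qed.

Lemma nsum_SS_S k u f : (2 <= u)%nat ->
  nsum (S (S k)) (S u) f = nsum (S (S k)) u f + nsum (S k) (S (S u)) f.
Proof.
  intro Hu. simpl nsum at 1. rewrite rsum_snoc by lia.
  replace (S u + 1)%nat with (S (S u)) by lia. reflexivity.
Qed.

Definition coef_nested (j m : nat) : R :=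
  catalan (j + 3)
  + rsum 1 j (fun k => nsum k (m + 1) (fun _ => catalan (j + 3 - k)))
  + nsum (S j) (m + 1) (fun x => 1 + INR x).

Lemma coef_nested_1 j : coef_nested j 1 = catalan (j + 3).
Proof.
  unfold coef_nested. rewrite (rsum_ext 1 j _ (fun _ => 0)), rsum_zero.
  - change (nsum (S j) (1 + 1) _) with 0. ring.
  - intros [|k] Hk; [lia | reflexivity].
Qed.

Lemma coef_a_nested j m : (1 <= m)%nat -> coef_a (S (S j)) m = coef_nested j m.
Proof.
  intro Hm. unfold coef_a. cbn [Nat.eqb].
  replace (S (S j) + 1)%nat with (j + 3)%nat by lia.
  destruct (Nat.eqb_spec m 0) as [|_]; [lia |].
  destruct (Nat.eqb_spec m 1) as [-> | _]; [rewrite coef_nested_1; reflexivity |].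
  unfold coef_nested, Snest.
  replace (S (S j) - 2)%nat with j by lia. replace (S (S j) - 1)%nat with (S j) by lia.
  reflexivity.
Qed.

(* Raising the bound m+1 by one adds the j_1 = m+2 slice of every nested sum;
   these slices reassemble into the coefficient at (j-1, m+2). *)
Lemma coef_nested_S j m : (1 <= m)%nat ->
  coef_nested j (S m) = coef_nested j m +
    match j with O => 1 + INR (S (S m)) | S j' => coef_nested j' (S (S m)) end.
Proof.
  intro Hm. unfold coef_nested at 1. replace (S m + 1)%nat with (S (m + 1)) by lia.
  set (slice := fun k => match k with
                         | S (S k') => nsum (S k') (S (S (m + 1))) (fun _ => catalan (j + 3 - k))
                         | _ => catalan (j + 3 - k)
                         end).
  rewrite (rsum_ext 1 j _
             (fun k => nsum k (m + 1) (fun _ => catalan (j + 3 - k)) + slice k)).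
  2:{ intros [|[|k]] Hk; [lia | rewrite nsum_1_S by lia | rewrite nsum_SS_S by lia]; reflexivity. }
  rewrite rsum_plus. unfold coef_nested.
  destruct j as [|j].
  - rewrite nsum_1_S by lia. replace (S (m + 1)) with (S (S m)) by lia.
    unfold rsum; simpl. ring.
  - rewrite nsum_SS_S by lia.
    rewrite (rsum_cons 1 (S j) slice), (rsum_shift 1 j slice) by lia.
    replace (S (S (m + 1))) with (S (S m) + 1)%nat by lia.
    rewrite (rsum_ext 1 j (fun k => slice (S k))
               (fun k => nsum k (S (S m) + 1) (fun _ => catalan (j + 3 - k)))).
    2:{ intros [|k] Hk; [lia | reflexivity]. }
    simpl (slice 1%nat). rewrite Nat.sub_0_r. ring.
Qed.

Lemma coef_nested_ballot j m : (1 <= m)%nat -> coef_nested j m = ballot (S (S j)) m.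
Proof.
  revert m. induction j as [|j IHj]; intros m Hm;
    induction m as [|m IHm]; try lia;
    (destruct m as [|m];
       [rewrite coef_nested_1, Nat.add_comm; apply catalan_S_ballot |]);
    rewrite coef_nested_S, IHm, (ballot_S_S (S _) (S m)) by lia.
  - rewrite ballot_1_l. reflexivity.
  - rewrite IHj by lia. reflexivity.
Qed.

Lemma coef_a_ballot i m : coef_a i m = ballot i m.
Proof.
  destruct i as [|[|j]].
  - rewrite ballot_0_l. reflexivity.
  - rewrite ballot_1_l. reflexivity.
  - destruct m as [|m].
    + apply catalan_ballot.
    + rewrite coef_a_nested, coef_nested_ballot by lia. reflexivity.
Qed.

Lemma forallb_seq_shift (P : nat -> bool) T :
  forallb P (seq 1 T) = forallb (fun k => P (S k)) (seq 0 T).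
Proof. rewrite <- seq_shift. induction (seq 0 T); simpl; congruence. Qed.

Lemma first_hit_L1_cons l m n T b w :
  first_hit_L1 l m n (S T) (b :: w) =
  (negb (inL1 (m, n) || inL2 l (m, n))
   && first_hit_L1 l (m + fst (step b)) (n + snd (step b)) T w)%bool.
Proof.
  unfold first_hit_L1. change (seq 0 (S T)) with (0%nat :: seq 1 T).
  cbn [forallb]. rewrite forallb_seq_shift.
  change (Defs.pos m n (b :: w) 0) with (m, n).
  destruct (negb (inL1 (m, n) || inL2 l (m, n))), (inL1 _); reflexivity.
Qed.

Lemma hit_term_0 I l m n : hit_term I l m n 0 = if inL1 (m, n) then 1 else 0.
Proof.
  unfold hit_term, first_hit_L1, path_prob. simpl. rewrite andb_true_r.
  change (Defs.pos m n [] 0) with (m, n). destruct (inL1 (m, n)); ring.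
Qed.

Lemma hit_term_S I l m n T :
  hit_term I l m n (S T) =
  if inL1 (m, n) || inL2 l (m, n) then 0
  else I * hit_term I l (m - 1) n T + (1 - I) * hit_term I l (m + 1) (n + 1) T.
Proof.
  unfold hit_term. cbn [paths]. rewrite map_app, fold_right_Rplus_app, !map_map.
  destruct (inL1 (m, n) || inL2 l (m, n)) eqn:Hexit.
  - rewrite !(map_ext (fun x => if first_hit_L1 l m n (S T) (_ :: x) then _ else _)
                      (fun _ => 0)), !fold_right_Rplus_zero by
      (intro w; rewrite first_hit_L1_cons, Hexit; reflexivity).
    ring.
  - rewrite !fold_right_Rplus_scal.
    f_equal; f_equal; apply map_ext; intro w;
      rewrite first_hit_L1_cons, Hexit; cbn [negb andb step fst snd].
    + replace (m + -1)%Z with (m - 1)%Z by lia. rewrite Z.add_0_r.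
      destruct (first_hit_L1 _ _ _ _ _); unfold path_prob; simpl; ring.
    + destruct (first_hit_L1 _ _ _ _ _); unfold path_prob; simpl; ring.
Qed.

Definition ballot_sum (I : R) (m d : nat) : R :=
  psum d (fun i => ballot i m * (1 - I) ^ i * I ^ (m + 1 + i)).

Lemma ballot_sum_0_S I d : ballot_sum I 0 (S d) = I + (1 - I) * ballot_sum I 1 d.
Proof.
  unfold ballot_sum. rewrite psum_S_l, psum_scal, ballot_0_l.
  f_equal; [simpl; ring |].
  apply psum_ext. intro i. rewrite ballot_S_0.
  replace (0 + 1 + S i)%nat with (1 + 1 + i)%nat by lia. simpl. ring.
Qed.

Lemma ballot_sum_S_S I m d :
  ballot_sum I (S m) (S d) = I * ballot_sum I m (S d) + (1 - I) * ballot_sum I (S (S m)) d.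
Proof.
  unfold ballot_sum. rewrite !psum_S_l, !psum_scal.
  rewrite Rmult_plus_distr_l, psum_scal, Rplus_assoc, psum_plus, !ballot_0_l.
  f_equal.
  - replace (S m + 1 + 0)%nat with (S (m + 1 + 0)) by lia. simpl. ring.
  - apply psum_ext. intro i. rewrite ballot_S_S.
    replace (S m + 1 + S i)%nat with (S (m + 1 + S i)) by lia.
    replace (S (S m) + 1 + i)%nat with (S (m + 1 + S i)) by lia. simpl. ring.
Qed.

Definition exit_value (I : R) (l m n : Z) : R :=
  if Z.eqb m (-1) then 1
  else if Z.eqb n l then 0
  else ballot_sum I (Z.to_nat m) (Z.to_nat (l - n)).

Lemma exit_value_step I l m n : (0 <= m)%Z -> (n < l)%Z ->
  exit_value I l m n =
  I * exit_value I l (m - 1) n + (1 - I) * exit_value I l (m + 1) (n + 1).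
Proof.
  intros Hm Hn. unfold exit_value.
  rewrite (proj2 (Z.eqb_neq m (-1))), (proj2 (Z.eqb_neq n l)),
          (proj2 (Z.eqb_neq (m + 1) (-1))) by lia.
  replace (Z.to_nat (l - n)) with (S (Z.to_nat (l - (n + 1)))) by lia.
  replace (if Z.eqb (n + 1) l then 0 else ballot_sum I (Z.to_nat (m + 1)) _)
    with (ballot_sum I (S (Z.to_nat m)) (Z.to_nat (l - (n + 1)))).
  2:{ destruct (Z.eqb_spec (n + 1) l).
      - replace (Z.to_nat (l - (n + 1))) with 0%nat by lia. reflexivity.
      - f_equal. lia. }
  destruct (Z.eqb_spec (m - 1) (-1)).
  - replace (Z.to_nat m) with 0%nat by lia. rewrite ballot_sum_0_S. ring.
  - replace (Z.to_nat m) with (S (Z.to_nat (m - 1))) by lia.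
    rewrite ballot_sum_S_S. ring.
Qed.

Lemma is_series_zero : is_series (fun _ : nat => 0) 0.
Proof.
  apply filterlim_ext with (fun _ => 0); [| apply filterlim_const].
  intro N. induction N as [|N IH].
  - rewrite sum_O. reflexivity.
  - rewrite sum_Sn, <- IH. unfold plus; simpl. ring.
Qed.

Lemma is_series_cons (a : nat -> R) (L : R) :
  is_series (fun k => a (S k)) L -> is_series a (a O + L).
Proof.
  intro HL. apply is_series_decr_1.
  change (is_series (fun k => a (S k)) (a O + L + - a O)).
  replace (a O + L + - a O) with L by ring.
  exact HL.
Qed.

Lemma is_series_lin (a b : nat -> R) (la lb x y : R) :
  is_series a la -> is_series b lb ->
  is_series (fun k => x * a k + y * b k) (x * la + y * lb).
Proof.
  intros Ha Hb. exact (is_series_plus _ _ _ _ (is_series_scal x _ _ Ha) (is_series_scal y _ _ Hb)).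
Qed.

Lemma hit_term_series I l : forall budget m n,
  (Z.to_nat (2 * (l - n) + m + 1) < budget)%nat -> (-1 <= m)%Z -> (n <= l)%Z ->
  is_series (hit_term I l m n) (exit_value I l m n).
Proof.
  induction budget as [|budget IH]; intros m n Hbudget Hm Hn; [lia |].
  destruct (Z.eq_dec m (-1)) as [-> | Hm1].
  - replace (exit_value I l (-1) n) with (hit_term I l (-1) n 0 + 0)
      by (rewrite hit_term_0; unfold exit_value; simpl; ring).
    apply is_series_cons, (is_series_ext (fun _ => 0)); [| exact is_series_zero].
    intro k. rewrite hit_term_S. reflexivity.
  - pose proof (proj2 (Z.eqb_neq m (-1)) Hm1) as Hm1b.
    destruct (Z.eq_dec n l) as [-> | Hnl].
    + unfold exit_value. rewrite Hm1b, Z.eqb_refl.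
      apply (is_series_ext (fun _ => 0)); [| exact is_series_zero].
      intros [|k]; rewrite ?hit_term_0, ?hit_term_S; unfold inL1, inL2; simpl;
        rewrite Hm1b, ?Z.eqb_refl; reflexivity.
    + rewrite exit_value_step by lia.
      replace (I * _ + _) with (hit_term I l m n 0 + (I * exit_value I l (m - 1) n
                                  + (1 - I) * exit_value I l (m + 1) (n + 1)))
        by (rewrite hit_term_0; unfold inL1; simpl; rewrite Hm1b; ring).
      apply is_series_cons.
      apply (is_series_ext (fun k => I * hit_term I l (m - 1) n k
                                     + (1 - I) * hit_term I l (m + 1) (n + 1) k)).
      * intro k. rewrite hit_term_S. unfold inL1, inL2. simpl.
        rewrite Hm1b, (proj2 (Z.eqb_neq n l) Hnl). reflexivity.
      * apply is_series_lin; apply IH; lia.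
Qed.

Theorem theorem1 (I : R) (l m n : Z) :
  0 <= I < 1 -> (1 <= l)%Z -> (-1 <= m)%Z -> (0 <= n <= l)%Z ->
  ((0 <= m)%Z -> (n < l)%Z ->
     Q I l m n =
     rsum 0 (Z.to_nat (l - n - 1))
       (fun i => coef_a i (Z.to_nat m) * (1 - I) ^ i * I ^ (Z.to_nat m + 1 + i)))
  /\ (m = (-1)%Z -> (n < l)%Z -> Q I l m n = 1)
  /\ ((0 < m)%Z -> n = l -> Q I l m n = 0).
Proof.
  (* The walk exits in finitely many steps, so no restriction on I or l is needed. *)
  intros _ _ Hm Hn.
  assert (HQ : Q I l m n = exit_value I l m n).
  { apply is_series_unique, (hit_term_series I l (S (Z.to_nat (2 * (l - n) + m + 1)))); lia. }
  rewrite HQ. unfold exit_value. split; [| split].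
  - intros Hm0 Hnl.
    rewrite (proj2 (Z.eqb_neq m (-1))), (proj2 (Z.eqb_neq n l)) by lia.
    rewrite rsum_0_psum. replace (S (Z.to_nat (l - n - 1))) with (Z.to_nat (l - n)) by lia.
    apply psum_ext. intro i. rewrite coef_a_ballot. reflexivity.
  - intros -> _. reflexivity.
  - intros Hm0 ->. rewrite (proj2 (Z.eqb_neq m (-1))), Z.eqb_refl by lia. reflexivity.
Qed.
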